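(* For the Earth–Sun system, i.e. with $\mu=\frac{59729}{19885499729}$ and $c=\frac{149896229}{10}\sqrt{\frac{1495978707}{3317816087784734}}$, let $P_0=(\xi_0,\eta_0)$ be an equilibrium point of the relativistic restricted three-body equations lying in the rectangle $$R=\Big[\tfrac{312498095327}{625000000000},\tfrac{312498189077}{625000000000}\Big]\times\Big[\tfrac{43301267124383}{50000000000000},\tfrac{4330127145451}{5000000000000}\Big]$$ (such a point exists; this is the relativistic Lagrangian point $L_4$). Then every eigenvalue of the linearization of the system at $(\xi_0,0,\eta_0,0)$ has zero real part; i.e. the relativistic point $L_4$ of the Earth–Sun system is linearly stable.
   Context: Set $\rho=\sqrt{\xi^2+\eta^2}$, $\rho_1=\sqrt{(\xi+\mu)^2+\eta^2}$, $\rho_2=\sqrt{(\xi+\mu-1)^2+\eta^2}$, $V=\dot\xi^2+\dot\eta^2+2(\xi\dot\eta-\dot\xi\eta)+\rho^2$, $$w_0=\tfrac12(\xi^2+\eta^2)+\frac{1-\mu}{\rho_1}+\frac{\mu}{\rho_2},$$ $$w_1=-\tfrac32\Big(1-\tfrac13\mu(1-\mu)\Big)\rho^2+\tfrac18V^2+\tfrac32\Big(\frac{1-\mu}{\rho_1}+\frac{\mu}{\rho_2}\Big)V-\tfrac12\Big(\frac{(1-\mu)^2}{\rho_1^2}+\frac{\mu^2}{\rho_2^2}\Big)$$ $$\qquad+\mu(1-\mu)\Big[\Big(4\dot\eta+\tfrac{7\xi}{2}\Big)\Big(\frac1{\rho_1}-\frac1{\rho_2}\Big)-\tfrac12\eta^2\Big(\frac{\mu}{\rho_1^3}+\frac{1-\mu}{\rho_2^3}\Big)+\frac{3\mu-2}{2\rho_1}-\frac{1}{\rho_1\rho_2}+\frac{1-3\mu}{2\rho_2}\Big],$$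 $w=w_0+\frac1{c^2}w_1$ (a function of the independent variables $\xi,\dot\xi,\eta,\dot\eta$), and $n=1-\frac{3}{2c^2}\big(1-\frac13\mu(1-\mu)\big)$. The relativistic restricted three-body equations are $$\ddot\xi-2n\dot\eta=\frac{\partial w}{\partial\xi}-\frac{d}{dt}\Big(\frac{\partial w}{\partial\dot\xi}\Big),\qquad \ddot\eta+2n\dot\xi=\frac{\partial w}{\partial\eta}-\frac{d}{dt}\Big(\frac{\partial w}{\partial\dot\eta}\Big).$$ An equilibrium point is a point $(\xi_0,\eta_0)$ at which $\partial w/\partial\xi=\partial w/\partial\eta=0$ with $\dot\xi=\dot\eta=0$. The linearization refers to the Jacobian at $(\xi_0,0,\eta_0,0)$ of the equivalent first-order system in $(\xi,\dot\xi,\eta,\dot\eta)$ (obtained by solving for $\ddot\xi,\ddot\eta$, possible near points where $1+w_{\dot\xi\dot\xi}+w_{\dot\eta\dot\eta}+w_{\dot\xi\dot\xi}w_{\dot\eta\dot\eta}-w_{\dot\xi\dot\eta}^2\ne0$). *)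

From Stdlib Require Import Reals ClassicalEpsilon.
Open Scope R_scope.

Definition deriv_at (g : R -> R) (x : R) : R :=
  epsilon (inhabits 0) (fun l => derivable_pt_lim g x l).

Definition fun4 := R -> R -> R -> R -> R.

(** Partial derivative with respect to variable k:
    0 = xi, 1 = xidot, 2 = eta, 3 = etadot. *)
Definition Dp (k : nat) (f : fun4) : fun4 := fun a b e d =>
  match k with
  | 0%nat => deriv_at (fun t => f t b e d) a
  | 1%nat => deriv_at (fun t => f a t e d) b
  | 2%nat => deriv_at (fun t => f a b t d) e
  | _ => deriv_at (fun t => f a b e t) d
  end.

Definition rho (xi eta : R) : R := sqrt (xi ^ 2 + eta ^ 2).
Definition rho1 (mu xi eta : R) : R := sqrt ((xi + mu) ^ 2 + eta ^ 2).
Definition rho2 (mu xi eta : R) : R := sqrt ((xi + mu - 1) ^ 2 + eta ^ 2).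

Definition Vf (xi xid eta etad : R) : R :=
  xid ^ 2 + etad ^ 2 + 2 * (xi * etad - xid * eta) + (rho xi eta) ^ 2.

Definition w0 (mu xi eta : R) : R :=
  1/2 * (xi ^ 2 + eta ^ 2) + (1 - mu) / rho1 mu xi eta + mu / rho2 mu xi eta.

Definition w1 (mu xi xid eta etad : R) : R :=
  let r := rho xi eta in
  let r1 := rho1 mu xi eta in
  let r2 := rho2 mu xi eta in
  let V := Vf xi xid eta etad in
  - (3/2) * (1 - 1/3 * mu * (1 - mu)) * r ^ 2
  + 1/8 * V ^ 2
  + 3/2 * ((1 - mu) / r1 + mu / r2) * V
  - 1/2 * ((1 - mu) ^ 2 / r1 ^ 2 + mu ^ 2 / r2 ^ 2)
  + mu * (1 - mu) *
     ((4 * etad + 7 * xi / 2) * (1 / r1 - 1 / r2)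
      - 1/2 * eta ^ 2 * (mu / r1 ^ 3 + (1 - mu) / r2 ^ 3)
      + (3 * mu - 2) / (2 * r1)
      - 1 / (r1 * r2)
      + (1 - 3 * mu) / (2 * r2)).

Definition wfun (mu c : R) : fun4 := fun xi xid eta etad =>
  w0 mu xi eta + 1 / c ^ 2 * w1 mu xi xid eta etad.

Definition nfac (mu c : R) : R :=
  1 - 3 / (2 * c ^ 2) * (1 - 1/3 * mu * (1 - mu)).

(** Solving the equations of motion for (xi'', eta''):
    (1 + w_{xd xd}) xi'' + w_{xd ed} eta'' = 2 n eta' + w_xi - w_{xd xi} xi' - w_{xd eta} eta'
    w_{ed xd} xi'' + (1 + w_{ed ed}) eta'' = -2 n xi' + w_eta - w_{ed xi} xi' - w_{ed eta} eta'
    where w_{a b} = d/db (dw/da). *)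
Definition acc_data (mu c : R) (a b e d : R) : R * R * R * R * R * R :=
  let W := wfun mu c in
  let n := nfac mu c in
  let A := 1 + Dp 1 (Dp 1 W) a b e d in
  let B := Dp 3 (Dp 1 W) a b e d in
  let C := Dp 1 (Dp 3 W) a b e d in
  let D := 1 + Dp 3 (Dp 3 W) a b e d in
  let E1 := 2 * n * d + Dp 0 W a b e d
            - Dp 0 (Dp 1 W) a b e d * b - Dp 2 (Dp 1 W) a b e d * d in
  let E2 := - 2 * n * b + Dp 2 W a b e d
            - Dp 0 (Dp 3 W) a b e d * b - Dp 2 (Dp 3 W) a b e d * d in
  (A, B, C, D, E1, E2).

Definition xidd (mu c : R) : fun4 := fun a b e d =>
  let '(A, B, C, D, E1, E2) := acc_data mu c a b e d in
  (E1 * D - B * E2) / (A * D - B * C).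

Definition etadd (mu c : R) : fun4 := fun a b e d =>
  let '(A, B, C, D, E1, E2) := acc_data mu c a b e d in
  (A * E2 - C * E1) / (A * D - B * C).

Definition field (mu c : R) (i : nat) : fun4 :=
  match i with
  | 0%nat => fun a b e d => b
  | 1%nat => xidd mu c
  | 2%nat => fun a b e d => d
  | _ => etadd mu c
  end.

Definition jacobian (mu c xi0 eta0 : R) : nat -> nat -> R :=
  fun i j => Dp j (field mu c i) xi0 0 eta0 0.

Definition is_equilibrium (mu c xi0 eta0 : R) : Prop :=
  Dp 0 (wfun mu c) xi0 0 eta0 0 = 0 /\ Dp 2 (wfun mu c) xi0 0 eta0 0 = 0.

Record Cpx := mkC { Re : R; Im : R }.
Definition C0 : Cpx := mkC 0 0.
Definition C1 : Cpx := mkC 1 0.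
Definition Cadd (x y : Cpx) : Cpx := mkC (Re x + Re y) (Im x + Im y).
Definition Cneg (x : Cpx) : Cpx := mkC (- Re x) (- Im x).
Definition Csub (x y : Cpx) : Cpx := Cadd x (Cneg y).
Definition Cmul (x y : Cpx) : Cpx :=
  mkC (Re x * Re y - Im x * Im y) (Re x * Im y + Im x * Re y).
Definition Cofr (r : R) : Cpx := mkC r 0.

Fixpoint Csum (f : nat -> Cpx) (n : nat) : Cpx :=
  match n with
  | O => C0
  | S m => Cadd (Csum f m) (f m)
  end.

Fixpoint det (n : nat) (M : nat -> nat -> Cpx) : Cpx :=
  match n with
  | O => C1
  | S m =>
      Csum (fun j =>
        let t := Cmul (M O j)
                   (det m (fun i k => M (S i) (if Nat.ltb k j then k else S k))) in
        if Nat.even j then t else Cneg t) (S m)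
  end.

Definition is_eigenvalue (n : nat) (J : nat -> nat -> R) (l : Cpx) : Prop :=
  det n (fun i j => Csub (if Nat.eqb i j then l else C0) (Cofr (J i j))) = C0.

Definition mu_ES : R := 59729 / 19885499729.
Definition c_ES : R := 149896229 / 10 * sqrt (1495978707 / 3317816087784734).

Definition in_rect (xi eta : R) : Prop :=
  312498095327 / 625000000000 <= xi <= 312498189077 / 625000000000 /\
  43301267124383 / 50000000000000 <= eta <= 4330127145451 / 5000000000000.

(* The partial derivatives of w up to order two, hence the entries of the
   linearisation, are polynomials with rational coefficients in xi, xi', eta, eta'
   and the inverse distances 1/rho1, 1/rho2.  Encoding them as syntax trees lets us
   differentiate symbolically (with a soundness proof) and bound them on a box by
   exact fixed-point interval arithmetic, evaluated by [vm_compute].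

   At an equilibrium the linearisation is that of a gyroscopic system
   M q'' = g R q' + K q, whose characteristic polynomial is, up to a factor,
   det M l^4 + c2 l^2 + c0.  If det M, c2, c0 > 0 and c2^2 > 4 det M c0, both
   roots in l^2 are negative reals, so every eigenvalue is purely imaginary; these
   four inequalities are certified on the whole rectangle.

   For existence, w_xi is increasing in xi on a sub-rectangle, so its zero
   xi*(eta) depends continuously on eta, and w_eta(xi*(eta), eta) changes sign
   between the two horizontal edges; the intermediate value theorem concludes. *)

From Stdlib Require Import Reals QArith Qreals Qround ZArith Lra Lia ClassicalEpsilon.
From Stdlib Require Import Ranalysis5.
Open Scope R_scope.

Lemma derivable_pt_lim_value f x l l' :
  derivable_pt_lim f x l -> l = l' -> derivable_pt_lim f x l'.
Proof. now intros H <-. Qed.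

Lemma derivable_pt_lim_plus_fun f g x lf lg :
  derivable_pt_lim f x lf -> derivable_pt_lim g x lg ->
  derivable_pt_lim (fun t => f t + g t) x (lf + lg).
Proof. apply derivable_pt_lim_plus. Qed.

Lemma derivable_pt_lim_mult_fun f g x lf lg :
  derivable_pt_lim f x lf -> derivable_pt_lim g x lg ->
  derivable_pt_lim (fun t => f t * g t) x (lf * g x + f x * lg).
Proof. apply derivable_pt_lim_mult. Qed.

Lemma derivable_pt_lim_div_fun f g x lf lg :
  derivable_pt_lim f x lf -> derivable_pt_lim g x lg -> g x <> 0 ->
  derivable_pt_lim (fun t => f t / g t) x ((lf * g x - lg * f x) / g x ^ 2).
Proof.
  intros Hf Hg Hgx. eapply derivable_pt_lim_value.
  - exact (derivable_pt_lim_div f g x lf lg Hf Hg Hgx).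
  - unfold Rsqr. now rewrite <- Rsqr_pow2.
Qed.

Lemma derivable_pt_lim_inv_sqrt f x l : derivable_pt_lim f x l -> 0 < f x ->
  derivable_pt_lim (fun t => / sqrt (f t)) x (- l / 2 * (/ sqrt (f x)) ^ 3).
Proof.
  intros Hf Hpos.
  assert (Hs : 0 < sqrt (f x)) by now apply sqrt_lt_R0.
  apply derivable_pt_lim_ext with (f := fun t => 1 / sqrt (f t)).
  { intro t. unfold Rdiv. ring. }
  eapply derivable_pt_lim_value.
  - apply derivable_pt_lim_div_fun; [apply derivable_pt_lim_const| |lra].
    exact (derivable_pt_lim_comp f sqrt x l _ Hf (derivable_pt_lim_sqrt _ Hpos)).
  - cbv beta. field. lra.
Qed.

Lemma deriv_at_unique f x l : derivable_pt_lim f x l -> deriv_at f x = l.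
Proof.
  intros H. apply (uniqueness_limite f x); [|exact H].
  apply (epsilon_spec (inhabits 0) (fun l => derivable_pt_lim f x l)). eauto.
Qed.

Lemma continuity_pt_eps_delta f x : continuity_pt f x <->
  forall eps, 0 < eps -> exists del, 0 < del /\
    forall t, Rabs (t - x) < del -> Rabs (f t - f x) < eps.
Proof.
  split.
  - intros H eps Heps. destruct (H eps Heps) as [del [Hdel Hf]].
    exists del; split; [exact Hdel|]. intros t Ht.
    destruct (Req_dec t x) as [->|Hne].
    + rewrite Rminus_diag, Rabs_R0; exact Heps.
    + apply (Hf t). split; [split; [exact I | congruence] | exact Ht].
  - intros H eps Heps. destruct (H eps Heps) as [del [Hdel Hf]].
    exists del; split; [exact Hdel|]. intros t [_ Ht]. now apply Hf.
Qed.

Definition inv_dist (c x y : R) : R := / sqrt ((x + c) ^ 2 + y ^ 2).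

Lemma derivable_pt_lim_inv_dist_x c x y : 0 < (x + c) ^ 2 + y ^ 2 ->
  derivable_pt_lim (fun t => inv_dist c t y) x (- (x + c) * inv_dist c x y ^ 3).
Proof.
  intros Hpos. eapply derivable_pt_lim_value.
  - apply (derivable_pt_lim_inv_sqrt (fun t => (t + c) ^ 2 + y ^ 2)); [|exact Hpos].
    apply derivable_pt_lim_plus_fun; [|apply derivable_pt_lim_const].
    apply derivable_pt_lim_ext with (f := fun t => (t + c) * (t + c)); [intro; ring|].
    apply derivable_pt_lim_mult_fun; apply derivable_pt_lim_plus_fun;
      apply derivable_pt_lim_id || apply derivable_pt_lim_const.
  - unfold inv_dist. cbv beta. field. apply Rgt_not_eq, sqrt_lt_R0, Hpos.
Qed.

Lemma derivable_pt_lim_inv_dist_y c x y : 0 < (x + c) ^ 2 + y ^ 2 ->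
  derivable_pt_lim (fun t => inv_dist c x t) y (- y * inv_dist c x y ^ 3).
Proof.
  intros Hpos. eapply derivable_pt_lim_value.
  - apply (derivable_pt_lim_inv_sqrt (fun t => (x + c) ^ 2 + t ^ 2)); [|exact Hpos].
    apply derivable_pt_lim_plus_fun; [apply derivable_pt_lim_const|].
    apply derivable_pt_lim_ext with (f := fun t => t * t); [intro; ring|].
    apply derivable_pt_lim_mult_fun; apply derivable_pt_lim_id.
  - unfold inv_dist. cbv beta. field. apply Rgt_not_eq, sqrt_lt_R0, Hpos.
Qed.

Lemma Q2R_0 : Q2R 0 = 0. Proof. unfold Q2R; simpl; field. Qed.
Lemma Q2R_1 : Q2R 1 = 1. Proof. unfold Q2R; simpl; field. Qed.
Lemma Q2R_m1 : Q2R (-1) = -1. Proof. unfold Q2R; simpl; field. Qed.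

Lemma Q2R_pred q : Q2R (q - 1) = Q2R q - 1.
Proof. now rewrite Q2R_minus, Q2R_1. Qed.

Lemma Q2R_num (n : Z) (d : positive) : Q2R (n # d) = IZR n / IZR (Zpos d).
Proof. reflexivity. Qed.

Lemma Q2R_inject_Z z : Q2R (inject_Z z) = IZR z.
Proof. unfold Q2R; simpl. field. Qed.

(** * Terms and symbolic differentiation *)

Inductive term : Type :=
  | TCst (r : Q)
  | TVar (i : nat)
  | TInv1
  | TInv2
  | TAdd (a b : term)
  | TMul (a b : term).

Definition t_opp (a : term) : term := TMul (TCst (-1)) a.
Definition t_cube (a : term) : term := TMul a (TMul a a).

(* Variables 0, 1, 2, 3 are xi, xi', eta, eta', in the order used by [Dp]. *)
Fixpoint teval (x0 x1 x2 x3 s1 s2 : R) (e : term) : R :=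
  match e with
  | TCst r => Q2R r
  | TVar i =>
      match i with 0%nat => x0 | 1%nat => x1 | 2%nat => x2 | 3%nat => x3 | _ => 0 end
  | TInv1 => s1
  | TInv2 => s2
  | TAdd a b => teval x0 x1 x2 x3 s1 s2 a + teval x0 x1 x2 x3 s1 s2 b
  | TMul a b => teval x0 x1 x2 x3 s1 s2 a * teval x0 x1 x2 x3 s1 s2 b
  end.

(* [TInv1], [TInv2] are the inverse distances to the primaries at (-q, 0) and (1-q, 0). *)
Definition eval_term (q : Q) (e : term) (x0 x1 x2 x3 : R) : R :=
  teval x0 x1 x2 x3 (inv_dist (Q2R q) x0 x2) (inv_dist (Q2R q - 1) x0 x2) e.

Fixpoint dterm (q : Q) (k : nat) (e : term) : term :=
  match e with
  | TCst _ => TCst 0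
  | TVar i => TCst (if Nat.eqb i k then 1 else 0)
  | TInv1 =>
      match k with
      | 0%nat => t_opp (TMul (TAdd (TVar 0) (TCst q)) (t_cube TInv1))
      | 2%nat => t_opp (TMul (TVar 2) (t_cube TInv1))
      | _ => TCst 0
      end
  | TInv2 =>
      match k with
      | 0%nat => t_opp (TMul (TAdd (TVar 0) (TCst (q - 1))) (t_cube TInv2))
      | 2%nat => t_opp (TMul (TVar 2) (t_cube TInv2))
      | _ => TCst 0
      end
  | TAdd a b => TAdd (dterm q k a) (dterm q k b)
  | TMul a b => TAdd (TMul (dterm q k a) b) (TMul a (dterm q k b))
  end.

Lemma dterm_comm q i j e x0 x1 x2 x3 s1 s2 :
  teval x0 x1 x2 x3 s1 s2 (dterm q i (dterm q j e))
  = teval x0 x1 x2 x3 s1 s2 (dterm q j (dterm q i e)).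
Proof.
  induction e as [r|n| | |a IHa b IHb|a IHa b IHb]; simpl; try reflexivity.
  - destruct i as [|[|[|i]]]; destruct j as [|[|[|j]]]; simpl;
      rewrite ?Q2R_0, ?Q2R_1, ?Q2R_m1, ?Q2R_pred; ring.
  - destruct i as [|[|[|i]]]; destruct j as [|[|[|j]]]; simpl;
      rewrite ?Q2R_0, ?Q2R_1, ?Q2R_m1, ?Q2R_pred; ring.
  - now rewrite IHa, IHb.
  - rewrite IHa, IHb; ring.
Qed.

Definition between_primaries (mu x : R) : Prop := - mu < x < 1 - mu.

Section Soundness.

Variables (q : Q) (x0 x1 x2 x3 : R).

Let mu := Q2R q.

Lemma dist1_pos : between_primaries mu x0 -> 0 < (x0 + mu) ^ 2 + x2 ^ 2.
Proof. unfold between_primaries; intros; nra. Qed.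

Lemma dist2_pos : between_primaries mu x0 -> 0 < (x0 + (mu - 1)) ^ 2 + x2 ^ 2.
Proof. unfold between_primaries; intros; nra. Qed.

Ltac Q2R_consts := rewrite ?Q2R_0, ?Q2R_1, ?Q2R_m1, ?Q2R_pred.

Ltac derivable_term_step :=
  first
  [ apply derivable_pt_lim_plus_fun; assumption
  | apply derivable_pt_lim_mult_fun; assumption
  | eapply derivable_pt_lim_value; [apply derivable_pt_lim_const | Q2R_consts; ring]
  | eapply derivable_pt_lim_value; [apply derivable_pt_lim_id | Q2R_consts; ring] ].

Lemma dterm_correct_xi e : between_primaries mu x0 ->
  derivable_pt_lim (fun t => eval_term q e t x1 x2 x3) x0 (eval_term q (dterm q 0 e) x0 x1 x2 x3).
Proof.
  intros Hx. unfold eval_term.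
  induction e as [r|[|[|[|[|i]]]]| | |a IHa b IHb|a IHa b IHb]; simpl; try derivable_term_step.
  - eapply derivable_pt_lim_value; [apply derivable_pt_lim_inv_dist_x, dist1_pos, Hx|].
    Q2R_consts. ring.
  - eapply derivable_pt_lim_value; [apply derivable_pt_lim_inv_dist_x, dist2_pos, Hx|].
    Q2R_consts. ring.
Qed.

Lemma dterm_correct_eta e : between_primaries mu x0 ->
  derivable_pt_lim (fun t => eval_term q e x0 x1 t x3) x2 (eval_term q (dterm q 2 e) x0 x1 x2 x3).
Proof.
  intros Hx. unfold eval_term.
  induction e as [r|[|[|[|[|i]]]]| | |a IHa b IHb|a IHa b IHb]; simpl; try derivable_term_step.
  - eapply derivable_pt_lim_value; [apply derivable_pt_lim_inv_dist_y, dist1_pos, Hx|].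
    Q2R_consts. ring.
  - eapply derivable_pt_lim_value; [apply derivable_pt_lim_inv_dist_y, dist2_pos, Hx|].
    Q2R_consts. ring.
Qed.

Lemma dterm_correct_xid e :
  derivable_pt_lim (fun t => eval_term q e x0 t x2 x3) x1 (eval_term q (dterm q 1 e) x0 x1 x2 x3).
Proof.
  unfold eval_term.
  induction e as [r|[|[|[|[|i]]]]| | |a IHa b IHb|a IHa b IHb]; simpl; derivable_term_step.
Qed.

Lemma dterm_correct_etad e :
  derivable_pt_lim (fun t => eval_term q e x0 x1 x2 t) x3 (eval_term q (dterm q 3 e) x0 x1 x2 x3).
Proof.
  unfold eval_term.
  induction e as [r|[|[|[|[|i]]]]| | |a IHa b IHb|a IHa b IHb]; simpl; derivable_term_step.
Qed.

End Soundness.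

Lemma eval_term_continuous_xi q e x0 x1 x2 x3 : between_primaries (Q2R q) x0 ->
  continuity_pt (fun t => eval_term q e t x1 x2 x3) x0.
Proof.
  intros Hx. apply derivable_continuous_pt. eexists. now apply dterm_correct_xi.
Qed.

Lemma eval_term_continuous_eta q e x0 x1 x2 x3 : between_primaries (Q2R q) x0 ->
  continuity_pt (fun t => eval_term q e x0 x1 t x3) x2.
Proof.
  intros Hx. apply derivable_continuous_pt. eexists. now apply dterm_correct_eta.
Qed.

Definition has_partial (k : nat) (f : fun4) (x0 x1 x2 x3 l : R) : Prop :=
  match k with
  | 0%nat => derivable_pt_lim (fun t => f t x1 x2 x3) x0 l
  | 1%nat => derivable_pt_lim (fun t => f x0 t x2 x3) x1 l
  | 2%nat => derivable_pt_lim (fun t => f x0 x1 t x3) x2 l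
  | _ => derivable_pt_lim (fun t => f x0 x1 x2 t) x3 l
  end.

Lemma has_partial_value k f x0 x1 x2 x3 l l' :
  has_partial k f x0 x1 x2 x3 l -> l = l' -> has_partial k f x0 x1 x2 x3 l'.
Proof. now intros H <-. Qed.

Lemma Dp_has_partial k f x0 x1 x2 x3 l :
  has_partial k f x0 x1 x2 x3 l -> Dp k f x0 x1 x2 x3 = l.
Proof. destruct k as [|[|[|k]]]; apply deriv_at_unique. Qed.

Section LocalPartials.

Variables (mu x0 x1 x2 x3 : R) (k : nat).
Hypothesis Hx : between_primaries mu x0.

Lemma has_partial_local (f g : fun4) l :
  (forall a b c d, between_primaries mu a -> f a b c d = g a b c d) ->
  has_partial k g x0 x1 x2 x3 l -> has_partial k f x0 x1 x2 x3 l.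
Proof.
  intros Hfg. destruct k as [|[|[|k']]]; simpl; intros Hg.
  - apply derivable_pt_lim_locally_ext with (f := fun t => g t x1 x2 x3) (a := - mu) (b := 1 - mu).
    + exact Hx.
    + intros z Hz. symmetry. now apply Hfg.
    + exact Hg.
  - apply (derivable_pt_lim_ext (fun t => g x0 t x2 x3)); [intro; symmetry; now apply Hfg | exact Hg].
  - apply (derivable_pt_lim_ext (fun t => g x0 x1 t x3)); [intro; symmetry; now apply Hfg | exact Hg].
  - apply (derivable_pt_lim_ext (fun t => g x0 x1 x2 t)); [intro; symmetry; now apply Hfg | exact Hg].
Qed.

Lemma has_partial_div (f g : fun4) lf lg :
  has_partial k f x0 x1 x2 x3 lf -> has_partial k g x0 x1 x2 x3 lg -> g x0 x1 x2 x3 <> 0 ->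
  has_partial k (fun a b c d => f a b c d / g a b c d) x0 x1 x2 x3
    ((lf * g x0 x1 x2 x3 - lg * f x0 x1 x2 x3) / g x0 x1 x2 x3 ^ 2).
Proof.
  destruct k as [|[|[|k']]]; simpl; intros Hf Hg Hg0;
    exact (derivable_pt_lim_div_fun _ _ _ _ _ Hf Hg Hg0).
Qed.

End LocalPartials.

Lemma has_partial_term q e k x0 x1 x2 x3 : (k <= 3)%nat -> between_primaries (Q2R q) x0 ->
  has_partial k (eval_term q e) x0 x1 x2 x3 (eval_term q (dterm q k e) x0 x1 x2 x3).
Proof.
  intros Hk Hx. destruct k as [|[|[|[|k']]]]; simpl.
  - now apply dterm_correct_xi.
  - apply dterm_correct_xid.
  - now apply dterm_correct_eta.
  - apply dterm_correct_etad.
  - lia.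
Qed.

Lemma Dp_term_local q e (f : fun4) k x0 x1 x2 x3 :
  (k <= 3)%nat -> between_primaries (Q2R q) x0 ->
  (forall a b c d, between_primaries (Q2R q) a -> f a b c d = eval_term q e a b c d) ->
  Dp k f x0 x1 x2 x3 = eval_term q (dterm q k e) x0 x1 x2 x3.
Proof.
  intros Hk Hx Hf. apply Dp_has_partial.
  apply (has_partial_local (Q2R q) _ _ _ _ _ Hx f (eval_term q e) _ Hf).
  now apply has_partial_term.
Qed.

Definition t_r2 : term := TAdd (TMul (TVar 0) (TVar 0)) (TMul (TVar 2) (TVar 2)).

Definition t_V : term :=
  TAdd (TAdd (TMul (TVar 1) (TVar 1)) (TMul (TVar 3) (TVar 3)))
       (TAdd (TMul (TCst 2) (TAdd (TMul (TVar 0) (TVar 3)) (t_opp (TMul (TVar 1) (TVar 2))))) t_r2).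

Definition t_U (q : Q) : term := TAdd (TMul (TCst (1 - q)) TInv1) (TMul (TCst q) TInv2).

Definition w0_term (q : Q) : term := TAdd (TMul (TCst (1 # 2)) t_r2) (t_U q).

Definition w1_term (q : Q) : term :=
  TAdd (TMul (TCst (- (3 # 2) * (1 - (1 # 3) * q * (1 - q)))) t_r2)
 (TAdd (TMul (TCst (1 # 8)) (TMul t_V t_V))
 (TAdd (TMul (TCst (3 # 2)) (TMul (t_U q) t_V))
 (TAdd (TMul (TCst (- (1 # 2)))
             (TAdd (TMul (TCst ((1 - q) * (1 - q))) (TMul TInv1 TInv1))
                   (TMul (TCst (q * q)) (TMul TInv2 TInv2))))
       (TMul (TCst (q * (1 - q)))
         (TAdd (TMul (TAdd (TMul (TCst 4) (TVar 3)) (TMul (TCst (7 # 2)) (TVar 0)))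
                     (TAdd TInv1 (t_opp TInv2)))
         (TAdd (TMul (TCst (- (1 # 2)))
                     (TMul (TMul (TVar 2) (TVar 2))
                           (TAdd (TMul (TCst q) (t_cube TInv1)) (TMul (TCst (1 - q)) (t_cube TInv2)))))
         (TAdd (TMul (TCst ((3 # 2) * q - 1)) TInv1)
         (TAdd (t_opp (TMul TInv1 TInv2))
               (TMul (TCst ((1 # 2) - (3 # 2) * q)) TInv2))))))))).

(* [kq] stands for the rational number 1 / c^2. *)
Definition w_term (q kq : Q) : term := TAdd (w0_term q) (TMul (TCst kq) (w1_term q)).

Lemma rho_sq x y : rho x y ^ 2 = x ^ 2 + y ^ 2.
Proof. unfold rho. rewrite pow2_sqrt; nra. Qed.

Lemma wfun_eval q kq c x xd y yd :
  Q2R kq = 1 / c ^ 2 -> between_primaries (Q2R q) x ->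
  wfun (Q2R q) c x xd y yd = eval_term q (w_term q kq) x xd y yd.
Proof.
  intros Hkq Hx.
  pose proof (dist1_pos q x y Hx) as H1. pose proof (dist2_pos q x y Hx) as H2.
  unfold wfun, w0, w1, Vf, rho1, rho2, eval_term, inv_dist.
  rewrite !rho_sq, <- Hkq.
  replace (x + Q2R q - 1) with (x + (Q2R q - 1)) by ring.
  assert (Hr1 : sqrt ((x + Q2R q) ^ 2 + y ^ 2) <> 0) by now apply Rgt_not_eq, sqrt_lt_R0.
  assert (Hr2 : sqrt ((x + (Q2R q - 1)) ^ 2 + y ^ 2) <> 0) by now apply Rgt_not_eq, sqrt_lt_R0.
  simpl.
  repeat first [rewrite Q2R_plus | rewrite Q2R_minus | rewrite Q2R_mult | rewrite Q2R_opp].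
  rewrite ?Q2R_num. field. auto.
Qed.

Definition n_term (q kq : Q) : Q := 1 - (3 # 2) * kq * (1 - (1 # 3) * q * (1 - q)).

Lemma n_term_eq q kq c : Q2R kq = 1 / c ^ 2 -> Q2R (n_term q kq) = nfac (Q2R q) c.
Proof.
  intros Hkq. unfold n_term, nfac.
  repeat first [rewrite Q2R_minus | rewrite Q2R_mult].
  rewrite Hkq, ?Q2R_num.
  unfold Rdiv. rewrite Rinv_mult. set (ic := / c ^ 2). field.
Qed.

Section Motion.

Variables (q n : Q) (W : term).

Definition t_E1 : term :=
  TAdd (TMul (TCst (2 * n)) (TVar 3))
       (TAdd (dterm q 0 W)
             (TAdd (t_opp (TMul (dterm q 0 (dterm q 1 W)) (TVar 1)))
                   (t_opp (TMul (dterm q 2 (dterm q 1 W)) (TVar 3))))).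
Definition t_E2 : term :=
  TAdd (TMul (TCst (-2 * n)) (TVar 1))
       (TAdd (dterm q 2 W)
             (TAdd (t_opp (TMul (dterm q 0 (dterm q 3 W)) (TVar 1)))
                   (t_opp (TMul (dterm q 2 (dterm q 3 W)) (TVar 3))))).
Definition t_A : term := TAdd (TCst 1) (dterm q 1 (dterm q 1 W)).
Definition t_B : term := dterm q 3 (dterm q 1 W).
Definition t_C : term := dterm q 1 (dterm q 3 W).
Definition t_D : term := TAdd (TCst 1) (dterm q 3 (dterm q 3 W)).
Definition t_xi_num : term := TAdd (TMul t_E1 t_D) (t_opp (TMul t_B t_E2)).
Definition t_eta_num : term := TAdd (TMul t_A t_E2) (t_opp (TMul t_C t_E1)).
Definition t_den : term := TAdd (TMul t_A t_D) (t_opp (TMul t_B t_C)).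

Variable c : R.
Hypothesis HW : forall x xd y yd,
  between_primaries (Q2R q) x -> wfun (Q2R q) c x xd y yd = eval_term q W x xd y yd.
Hypothesis Hn : Q2R n = nfac (Q2R q) c.

Lemma Dp_wfun k x xd y yd : (k <= 3)%nat -> between_primaries (Q2R q) x ->
  Dp k (wfun (Q2R q) c) x xd y yd = eval_term q (dterm q k W) x xd y yd.
Proof. intros Hk Hx. now apply Dp_term_local. Qed.

Lemma Dp2_wfun j k x xd y yd : (j <= 3)%nat -> (k <= 3)%nat -> between_primaries (Q2R q) x ->
  Dp j (Dp k (wfun (Q2R q) c)) x xd y yd = eval_term q (dterm q j (dterm q k W)) x xd y yd.
Proof. intros Hj Hk Hx. apply Dp_term_local; auto. intros; now apply Dp_wfun. Qed.

Ltac motion_eval :=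
  cbv beta iota zeta delta [xidd etadd acc_data];
  rewrite !Dp2_wfun by (auto; lia); rewrite !Dp_wfun by (auto; lia);
  unfold eval_term, t_xi_num, t_eta_num, t_den, t_E1, t_E2, t_A, t_B, t_C, t_D, t_opp; simpl;
  rewrite ?Q2R_mult, Hn, ?Q2R_num;
  f_equal; field.

Lemma xidd_eval x xd y yd : between_primaries (Q2R q) x ->
  xidd (Q2R q) c x xd y yd = eval_term q t_xi_num x xd y yd / eval_term q t_den x xd y yd.
Proof. intros Hx. motion_eval. Qed.

Lemma etadd_eval x xd y yd : between_primaries (Q2R q) x ->
  etadd (Q2R q) c x xd y yd = eval_term q t_eta_num x xd y yd / eval_term q t_den x xd y yd.
Proof. intros Hx. motion_eval. Qed.

End Motion.

(** * Linearisation at an equilibrium *)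

(* [J] is the first-order form of M q'' = g R q' + K q, with M = [[A, B], [B, D]],
   K = [[a, b], [b, d]] and R the rotation by a right angle. *)
Definition gyroscopic (J : nat -> nat -> R) (A B D a b d g : R) : Prop :=
  let De := A * D - B * B in
  J 0%nat 0%nat = 0 /\ J 0%nat 1%nat = 1 /\ J 0%nat 2%nat = 0 /\ J 0%nat 3%nat = 0 /\
  J 2%nat 0%nat = 0 /\ J 2%nat 1%nat = 0 /\ J 2%nat 2%nat = 0 /\ J 2%nat 3%nat = 1 /\
  J 1%nat 0%nat = (D * a - B * b) / De /\ J 1%nat 1%nat = B * g / De /\
  J 1%nat 2%nat = (D * b - B * d) / De /\ J 1%nat 3%nat = D * g / De /\
  J 3%nat 0%nat = (A * b - B * a) / De /\ J 3%nat 1%nat = - (A * g) / De /\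
  J 3%nat 2%nat = (A * d - B * b) / De /\ J 3%nat 3%nat = - (B * g) / De.

Section Equilibrium.

Variables (q n : Q) (W : term) (c : R).
Hypothesis HW : forall x xd y yd,
  between_primaries (Q2R q) x -> wfun (Q2R q) c x xd y yd = eval_term q W x xd y yd.
Hypothesis Hn : Q2R n = nfac (Q2R q) c.

Definition hessian (x y : R) (i j : nat) : R := eval_term q (dterm q i (dterm q j W)) x 0 y 0.

Variables x y : R.
Hypothesis Hx : between_primaries (Q2R q) x.
Hypothesis Heq : is_equilibrium (Q2R q) c x y.

Let A := 1 + hessian x y 1 1.
Let B := hessian x y 3 1.
Let D := 1 + hessian x y 3 3.
Hypothesis Hdelta : A * D - B * B <> 0.

Lemma eval_den_at_rest : eval_term q (t_den q W) x 0 y 0 = A * D - B * B.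
Proof.
  unfold A, B, D, hessian, eval_term, t_den, t_A, t_B, t_C, t_D, t_opp; simpl.
  rewrite (dterm_comm q 1 3), Q2R_1, Q2R_m1. ring.
Qed.

Lemma eval_num_equilibrium :
  eval_term q (t_xi_num q n W) x 0 y 0 = 0 /\ eval_term q (t_eta_num q n W) x 0 y 0 = 0.
Proof.
  destruct Heq as [H0 H2]. rewrite (Dp_wfun q W c HW) in H0, H2 by (auto; lia).
  unfold eval_term in *. unfold t_xi_num, t_eta_num, t_E1, t_E2, t_opp; simpl.
  rewrite H0, H2. split; ring.
Qed.

Lemma jacobian_acceleration (i : nat) (t_num : term) (acc : fun4) :
  field (Q2R q) c i = acc ->
  (forall a b e d, between_primaries (Q2R q) a ->
     acc a b e d = eval_term q t_num a b e d / eval_term q (t_den q W) a b e d) ->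
  eval_term q t_num x 0 y 0 = 0 ->
  forall j, (j <= 3)%nat ->
  jacobian (Q2R q) c x y i j = eval_term q (dterm q j t_num) x 0 y 0 / (A * D - B * B).
Proof.
  intros Hi Hacc Hnum j Hj. unfold jacobian. rewrite Hi, <- eval_den_at_rest.
  apply Dp_has_partial.
  eapply has_partial_local; [exact Hx | exact Hacc |].
  eapply (has_partial_value j).
  - apply has_partial_div; try now apply has_partial_term.
    rewrite eval_den_at_rest. exact Hdelta.
  - rewrite Hnum, eval_den_at_rest. field. exact Hdelta.
Qed.

Lemma jacobian_gyroscopic :
  gyroscopic (jacobian (Q2R q) c x y) A B D
    (hessian x y 0 0) (hessian x y 2 0) (hessian x y 2 2)
    (2 * Q2R n + hessian x y 3 0 - hessian x y 2 1).
Proof.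
  destruct eval_num_equilibrium as [Hxn Hyn].
  pose proof (jacobian_acceleration 1 _ _ eq_refl (xidd_eval q n W c HW Hn) Hxn) as HX.
  pose proof (jacobian_acceleration 3 _ _ eq_refl (etadd_eval q n W c HW Hn) Hyn) as HY.
  destruct Heq as [H0 H2]. rewrite (Dp_wfun q W c HW) in H0, H2 by (auto; lia).
  unfold eval_term in H0, H2.
  repeat split;
    try (unfold jacobian; simpl; apply deriv_at_unique;
         first [apply derivable_pt_lim_id | apply derivable_pt_lim_const]; fail);
    rewrite ?HX, ?HY by lia;
    unfold A, B, D, hessian, eval_term, t_xi_num, t_eta_num, t_E1, t_E2, t_A, t_B, t_C, t_D, t_opp;
    simpl; rewrite ?Q2R_mult, ?Q2R_0, ?Q2R_1, ?Q2R_m1, ?H0, ?H2;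
    rewrite ?(dterm_comm q 0 2), ?(dterm_comm q 1 3), ?(dterm_comm q 0 1), ?(dterm_comm q 1 2),
      ?(dterm_comm q 0 3), ?(dterm_comm q 2 3);
    rewrite ?Q2R_num; unfold Rdiv; f_equal; field.
Qed.

End Equilibrium.

Definition gyro_c2 (A B D a b d g : R) : R := g * g - A * d - D * a + 2 * B * b.
Definition gyro_c0 (a b d : R) : R := a * d - b * b.

(* Up to the factor 1 / (A D - B^2), the characteristic polynomial of a gyroscopic
   matrix is (A D - B^2) l^4 + gyro_c2 l^2 + gyro_c0. *)
Definition gyro_stable (A B D a b d g : R) : Prop :=
  0 < A * D - B * B /\ 0 < gyro_c2 A B D a b d g /\ 0 < gyro_c0 a b d /\
  4 * (A * D - B * B) * gyro_c0 a b d < gyro_c2 A B D a b d g ^ 2.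

(* [X + i Y] is the square of the root [x + i y]. *)
Lemma biquadratic_root_imaginary (p c2 c0 x y : R) :
  0 < p -> 0 < c2 -> 0 < c0 -> 4 * p * c0 < c2 ^ 2 ->
  let X := x * x - y * y in let Y := 2 * x * y in
  p * (X * X - Y * Y) + c2 * X + c0 = 0 -> p * (2 * X * Y) + c2 * Y = 0 -> x = 0.
Proof.
  intros Hp Hc2 Hc0 Hdisc X Y HR HI.
  assert (HY : Y * (2 * p * X + c2) = 0) by (rewrite <- HI; ring).
  apply Rmult_integral in HY as [HY | HY].
  - assert (HX : X < 0).
    { destruct (Rlt_or_le X 0) as [h|h]; [exact h|]. rewrite HY in HR. nra. }
    assert (Hxy : x * y = 0) by (unfold Y in HY; lra).
    apply Rmult_integral in Hxy as [h|h]; [exact h|]. subst y. unfold X in HX. nra.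
  - exfalso.
    assert (E : 4 * p * p * (Y * Y)
                = (2 * p * X) * (2 * p * X) + 2 * c2 * (2 * p * X) + 4 * p * c0) by nra.
    replace (2 * p * X) with (- c2) in E by lra.
    assert (0 <= 4 * p * p * (Y * Y)) by (apply Rmult_le_pos; nra).
    nra.
Qed.

Lemma gyroscopic_eigenvalue_imaginary J A B D a b d g l :
  gyroscopic J A B D a b d g -> gyro_stable A B D a b d g ->
  is_eigenvalue 4 J l -> Re l = 0.
Proof.
  intros HJ (HDe & Hc2 & Hc0 & Hdisc) Hev.
  destruct HJ as (H00 & H01 & H02 & H03 & H20 & H21 & H22 & H23 &
                  H10 & H11 & H12 & H13 & H30 & H31 & H32 & H33).
  unfold is_eigenvalue in Hev.
  assert (HR := f_equal Re Hev). assert (HI := f_equal Im Hev).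
  destruct l as [x y]. simpl in HR, HI |- *.
  rewrite H00, H01, H02, H03, H20, H21, H22, H23, H10, H11, H12, H13,
    H30, H31, H32, H33 in HR, HI.
  unfold gyro_c2, gyro_c0 in *.
  apply (biquadratic_root_imaginary (A * D - B * B) (g * g - A * d - D * a + 2 * B * b)
           (a * d - b * b) x y); try assumption.
  - apply (Rmult_eq_reg_r (/ (A * D - B * B))); [|apply Rinv_neq_0_compat; lra].
    rewrite Rmult_0_l, <- HR. field. lra.
  - apply (Rmult_eq_reg_r (/ (A * D - B * B))); [|apply Rinv_neq_0_compat; lra].
    rewrite Rmult_0_l, <- HI. field. lra.
Qed.

Section GyroscopicTerms.

Variables (q n : Q) (W : term).

Definition t_hess (i j : nat) : term := dterm q i (dterm q j W).
Definition t_g : term := TAdd (TCst (2 * n)) (TAdd (t_hess 3 0) (t_opp (t_hess 2 1))).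
Definition t_delta : term := TAdd (TMul (t_A q W) (t_D q W)) (t_opp (TMul (t_B q W) (t_B q W))).
Definition t_c2 : term :=
  TAdd (TMul t_g t_g)
   (TAdd (t_opp (TMul (t_A q W) (t_hess 2 2)))
    (TAdd (t_opp (TMul (t_D q W) (t_hess 0 0))) (TMul (TCst 2) (TMul (t_B q W) (t_hess 2 0))))).
Definition t_c0 : term := TAdd (TMul (t_hess 0 0) (t_hess 2 2)) (t_opp (TMul (t_hess 2 0) (t_hess 2 0))).
Definition t_disc : term := TAdd (TMul t_c2 t_c2) (t_opp (TMul (TCst 4) (TMul t_delta t_c0))).

Lemma gyro_stable_of_terms x y :
  0 < eval_term q t_delta x 0 y 0 -> 0 < eval_term q t_c2 x 0 y 0 ->
  0 < eval_term q t_c0 x 0 y 0 -> 0 < eval_term q t_disc x 0 y 0 ->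
  gyro_stable (1 + hessian q W x y 1 1) (hessian q W x y 3 1) (1 + hessian q W x y 3 3)
    (hessian q W x y 0 0) (hessian q W x y 2 0) (hessian q W x y 2 2)
    (2 * Q2R n + hessian q W x y 3 0 - hessian q W x y 2 1).
Proof.
  unfold t_disc, t_c2, t_c0, t_delta, t_g, t_hess, t_A, t_B, t_D, t_opp, eval_term.
  simpl. rewrite ?Q2R_mult, ?Q2R_1, ?Q2R_m1, ?Q2R_num.
  unfold gyro_stable, gyro_c2, gyro_c0, hessian, eval_term.
  intros Hde Hc2 Hc0 Hdisc. repeat split; lra.
Qed.

End GyroscopicTerms.

(** * Interval arithmetic *)

Definition scale : positive := 2 ^ 80.

Definition fx (z : Z) : R := IZR z / IZR (Zpos scale).

Lemma scale_pos : 0 < IZR (Zpos scale).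
Proof. apply IZR_lt. reflexivity. Qed.

Definition div_down (m : Z) : Z := (m / Zpos scale)%Z.
Definition div_up (m : Z) : Z := (- (- m / Zpos scale))%Z.

Lemma div_down_le m : IZR (div_down m) * IZR (Zpos scale) <= IZR m.
Proof.
  unfold div_down. rewrite <- mult_IZR. apply IZR_le.
  rewrite Z.mul_comm. now apply Z.mul_div_le.
Qed.

Lemma div_up_ge m : IZR m <= IZR (div_up m) * IZR (Zpos scale).
Proof.
  unfold div_up. rewrite <- mult_IZR. apply IZR_le.
  pose proof (Z.mul_div_le (- m) (Zpos scale) eq_refl). lia.
Qed.

Lemma fx_mult a b : fx a * fx b = fx (a * b) / IZR (Zpos scale).
Proof. unfold fx. rewrite mult_IZR. pose proof scale_pos. field. lra. Qed.

Lemma fx_div_down m p : (m <= p)%Z -> fx (div_down m) <= fx p / IZR (Zpos scale).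
Proof.
  intros H. apply IZR_le in H. pose proof (div_down_le m). pose proof scale_pos.
  unfold fx, Rdiv. rewrite Rmult_assoc, <- Rinv_mult.
  apply Rmult_le_reg_r with (IZR (Zpos scale) * IZR (Zpos scale)); [nra|].
  field_simplify; lra.
Qed.

Lemma fx_div_up m p : (p <= m)%Z -> fx p / IZR (Zpos scale) <= fx (div_up m).
Proof.
  intros H. apply IZR_le in H. pose proof (div_up_ge m). pose proof scale_pos.
  unfold fx, Rdiv. rewrite Rmult_assoc, <- Rinv_mult.
  apply Rmult_le_reg_r with (IZR (Zpos scale) * IZR (Zpos scale)); [nra|].
  field_simplify; lra.
Qed.

Definition interval : Type := Z * Z.

Definition in_interval (u : interval) (x : R) : Prop := fx (fst u) <= x <= fx (snd u).

Definition iadd (u v : interval) : interval := ((fst u + fst v)%Z, (snd u + snd v)%Z).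

Definition imul (u v : interval) : interval :=
  let '(a, b) := u in let '(c, d) := v in
  (div_down (Z.min (Z.min (a * c) (a * d)) (Z.min (b * c) (b * d))),
   div_up (Z.max (Z.max (a * c) (a * d)) (Z.max (b * c) (b * d)))).

Lemma Rmult_ge_corners a b c d x y m : a <= x <= b -> c <= y <= d ->
  m <= a * c -> m <= a * d -> m <= b * c -> m <= b * d -> m <= x * y.
Proof.
  intros Hx Hy H1 H2 H3 H4. destruct (Rle_dec 0 y).
  - assert (a * y <= x * y) by nra. destruct (Rle_dec 0 a); nra.
  - assert (b * y <= x * y) by nra. destruct (Rle_dec 0 b); nra.
Qed.

Lemma Rmult_le_corners a b c d x y m : a <= x <= b -> c <= y <= d ->
  a * c <= m -> a * d <= m -> b * c <= m -> b * d <= m -> x * y <= m.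
Proof.
  intros Hx Hy H1 H2 H3 H4. destruct (Rle_dec 0 y).
  - assert (x * y <= b * y) by nra. destruct (Rle_dec 0 b); nra.
  - assert (x * y <= a * y) by nra. destruct (Rle_dec 0 a); nra.
Qed.

Lemma iadd_correct u v x y : in_interval u x -> in_interval v y -> in_interval (iadd u v) (x + y).
Proof.
  destruct u as [a b], v as [c d]; unfold in_interval, fx; simpl.
  rewrite !plus_IZR. unfold Rdiv. lra.
Qed.

Lemma imul_correct u v x y : in_interval u x -> in_interval v y -> in_interval (imul u v) (x * y).
Proof.
  destruct u as [a b], v as [c d]; unfold in_interval; simpl; intros Hx Hy. split.
  - apply (Rmult_ge_corners (fx a) (fx b) (fx c) (fx d)); auto;
      rewrite fx_mult; apply fx_div_down; lia.
  - apply (Rmult_le_corners (fx a) (fx b) (fx c) (fx d)); auto;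
      rewrite fx_mult; apply fx_div_up; lia.
Qed.

Definition q_down (r : Q) : Z := Qfloor (r * (Zpos scale # 1)).
Definition q_up (r : Q) : Z := Qceiling (r * (Zpos scale # 1)).

Lemma Q2R_scale : Q2R (Zpos scale # 1) = IZR (Zpos scale).
Proof. rewrite Q2R_num. field. Qed.

Lemma q_down_le r : fx (q_down r) <= Q2R r.
Proof.
  pose proof (Qle_Rle _ _ (Qfloor_le (r * (Zpos scale # 1)))) as Hz.
  rewrite Q2R_mult, Q2R_scale, Q2R_inject_Z in Hz.
  unfold fx, q_down. pose proof scale_pos.
  apply Rmult_le_reg_r with (IZR (Zpos scale)); [lra|].
  unfold Rdiv in *. rewrite Rmult_assoc, Rinv_l by lra. lra.
Qed.

Lemma q_up_ge r : Q2R r <= fx (q_up r).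
Proof.
  pose proof (Qle_Rle _ _ (Qle_ceiling (r * (Zpos scale # 1)))) as Hz.
  rewrite Q2R_mult, Q2R_scale, Q2R_inject_Z in Hz.
  unfold fx, q_up. pose proof scale_pos.
  apply Rmult_le_reg_r with (IZR (Zpos scale)); [lra|].
  unfold Rdiv in *. rewrite Rmult_assoc, Rinv_l by lra. lra.
Qed.

Record box : Type := mkbox { box_xi : interval; box_eta : interval; box_s1 : interval; box_s2 : interval }.

Fixpoint ieval (bx : box) (e : term) : interval :=
  match e with
  | TCst r => (q_down r, q_up r)
  | TVar i => match i with 0%nat => box_xi bx | 2%nat => box_eta bx | _ => (0%Z, 0%Z) end
  | TInv1 => box_s1 bx
  | TInv2 => box_s2 bx
  | TAdd a b => iadd (ieval bx a) (ieval bx b)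
  | TMul a b => imul (ieval bx a) (ieval bx b)
  end.

Lemma ieval_correct bx e x y s1 s2 :
  in_interval (box_xi bx) x -> in_interval (box_eta bx) y ->
  in_interval (box_s1 bx) s1 -> in_interval (box_s2 bx) s2 ->
  in_interval (ieval bx e) (teval x 0 y 0 s1 s2 e).
Proof.
  intros Hx Hy H1 H2.
  induction e as [r|[|[|[|[|i]]]]| | |a IHa b IHb|a IHa b IHb]; simpl;
    try assumption; try (unfold in_interval, fx; simpl; unfold Rdiv; lra).
  - split; [apply q_down_le | apply q_up_ge].
  - now apply iadd_correct.
  - now apply imul_correct.
Qed.

Definition is_zero (e : term) : bool := match e with TCst r => Qeq_bool r 0 | _ => false end.
Definition is_one (e : term) : bool := match e with TCst r => Qeq_bool r 1 | _ => false end.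

Definition smart_add (a b : term) : term :=
  if is_zero a then b else if is_zero b then a else TAdd a b.
Definition smart_mul (a b : term) : term :=
  if is_zero a || is_zero b then TCst 0
  else if is_one a then b else if is_one b then a else TMul a b.

(* Setting the velocities to zero before the interval evaluation prunes most of
   the (huge) derivative terms. *)
Fixpoint at_rest (e : term) : term :=
  match e with
  | TVar 1 | TVar 3 => TCst 0
  | TAdd a b => smart_add (at_rest a) (at_rest b)
  | TMul a b => smart_mul (at_rest a) (at_rest b)
  | _ => e
  end.

Section AtRest.

Variables x y s1 s2 : R.

Lemma is_zero_eval e : is_zero e = true -> teval x 0 y 0 s1 s2 e = 0.
Proof.
  destruct e; simpl; try discriminate.
  intros H. apply Qeq_bool_iff, Qeq_eqR in H. now rewrite H, Q2R_0.
Qed.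

Lemma is_one_eval e : is_one e = true -> teval x 0 y 0 s1 s2 e = 1.
Proof.
  destruct e; simpl; try discriminate.
  intros H. apply Qeq_bool_iff, Qeq_eqR in H. now rewrite H, Q2R_1.
Qed.

Lemma smart_add_eval a b :
  teval x 0 y 0 s1 s2 (smart_add a b) = teval x 0 y 0 s1 s2 a + teval x 0 y 0 s1 s2 b.
Proof.
  unfold smart_add. destruct (is_zero a) eqn:Ha; [rewrite (is_zero_eval a Ha); ring|].
  destruct (is_zero b) eqn:Hb; [rewrite (is_zero_eval b Hb); ring | reflexivity].
Qed.

Lemma smart_mul_eval a b :
  teval x 0 y 0 s1 s2 (smart_mul a b) = teval x 0 y 0 s1 s2 a * teval x 0 y 0 s1 s2 b.
Proof.
  unfold smart_mul. destruct (is_zero a) eqn:Ha; [rewrite (is_zero_eval a Ha); simpl; rewrite Q2R_0; ring|].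
  destruct (is_zero b) eqn:Hb; [rewrite (is_zero_eval b Hb); simpl; rewrite Q2R_0; ring|]. simpl.
  destruct (is_one a) eqn:Ha1; [rewrite (is_one_eval a Ha1); ring|].
  destruct (is_one b) eqn:Hb1; [rewrite (is_one_eval b Hb1); ring | reflexivity].
Qed.

Lemma at_rest_eval e : teval x 0 y 0 s1 s2 (at_rest e) = teval x 0 y 0 s1 s2 e.
Proof.
  induction e as [r|[|[|[|[|i]]]]| | |a IHa b IHb|a IHa b IHb]; simpl; try reflexivity;
    try apply Q2R_0.
  - now rewrite smart_add_eval, IHa, IHb.
  - now rewrite smart_mul_eval, IHa, IHb.
Qed.

End AtRest.

Lemma inv_sqrt_bounds r rl rh lo hi : 0 < rl -> rl <= r <= rh ->
  0 <= lo -> lo * lo * rh <= 1 -> 0 <= hi -> 1 <= hi * hi * rl -> lo <= / sqrt r <= hi.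
Proof.
  intros Hrl Hr Hlo Hlo2 Hhi Hhi2.
  assert (Hs : 0 < sqrt r) by (apply sqrt_lt_R0; lra).
  assert (Hss : sqrt r * sqrt r = r) by (apply sqrt_sqrt; lra).
  split.
  - assert (lo * sqrt r <= 1).
    { destruct (Rle_dec (lo * sqrt r) 1) as [h|h]; [exact h|]. exfalso.
      assert (E : (lo * sqrt r) * (lo * sqrt r) = lo * lo * (sqrt r * sqrt r)) by ring.
      rewrite Hss in E.
      nra. }
    apply Rmult_le_reg_r with (sqrt r); [exact Hs|]. rewrite Rinv_l; lra.
  - assert (1 <= hi * sqrt r).
    { destruct (Rle_dec 1 (hi * sqrt r)) as [h|h]; [exact h|]. exfalso.
      assert (E : (hi * sqrt r) * (hi * sqrt r) = hi * hi * (sqrt r * sqrt r)) by ring.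
      rewrite Hss in E.
      assert (0 <= hi * sqrt r) by nra. nra. }
    apply Rmult_le_reg_r with (sqrt r); [exact Hs|]. rewrite Rinv_l; lra.
Qed.

Local Open Scope Q_scope.

Definition scale_sq : Q := (Zpos scale # 1) * (Zpos scale # 1).

(* Candidate fixed-point bounds for [/ sqrt r], [rl <= r <= rh], validated by [inv_sqrt_check]. *)
Definition inv_sqrt_down (rh : Q) : Z := Z.sqrt (Qfloor (scale_sq / rh)).
Definition inv_sqrt_up (rl : Q) : Z := (Z.sqrt (Qceiling (scale_sq / rl)) + 1)%Z.

Definition inv_sqrt_check (rl rh lo hi : Q) : bool :=
  negb (Qle_bool rl 0) && Qle_bool 0 lo && Qle_bool (lo * lo * rh) 1 &&
  Qle_bool 0 hi && Qle_bool 1 (hi * hi * rl).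

Definition dist1_lo (q xl yl : Q) : Q := (xl + q) * (xl + q) + yl * yl.
Definition dist1_hi (q xu yu : Q) : Q := (xu + q) * (xu + q) + yu * yu.
Definition dist2_lo (q xu yl : Q) : Q := (xu + q - 1) * (xu + q - 1) + yl * yl.
Definition dist2_hi (q xl yu : Q) : Q := (xl + q - 1) * (xl + q - 1) + yu * yu.

Definition box_of (q xl xu yl yu : Q) : box :=
  mkbox (q_down xl, q_up xu) (q_down yl, q_up yu)
    (inv_sqrt_down (dist1_hi q xu yu), inv_sqrt_up (dist1_lo q xl yl))
    (inv_sqrt_down (dist2_hi q xl yu), inv_sqrt_up (dist2_lo q xu yl)).

Definition box_valid (q xl xu yl yu : Q) : bool :=
  Qle_bool 0 (xl + q) && Qle_bool (xu + q) 1 && Qle_bool 0 yl &&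
  Qle_bool xl xu && Qle_bool yl yu &&
  inv_sqrt_check (dist1_lo q xl yl) (dist1_hi q xu yu)
    (inv_sqrt_down (dist1_hi q xu yu) # scale) (inv_sqrt_up (dist1_lo q xl yl) # scale) &&
  inv_sqrt_check (dist2_lo q xu yl) (dist2_hi q xl yu)
    (inv_sqrt_down (dist2_hi q xl yu) # scale) (inv_sqrt_up (dist2_lo q xu yl) # scale).

Definition certify (q : Q) (e : term) (xl xu yl yu L U : Q) : bool :=
  box_valid q xl xu yl yu &&
  (let r := ieval (box_of q xl xu yl yu) (at_rest e) in
   Qle_bool L (fst r # scale) && Qle_bool (snd r # scale) U).

Local Close Scope Q_scope.

Lemma inv_sqrt_check_correct rl rh lo hi r : inv_sqrt_check rl rh lo hi = true ->
  Q2R rl <= r <= Q2R rh -> Q2R lo <= / sqrt r <= Q2R hi.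
Proof.
  unfold inv_sqrt_check. intros H Hr.
  repeat (apply andb_prop in H; destruct H as [H ?]).
  apply negb_true_iff in H.
  assert (Hrl : 0 < Q2R rl).
  { rewrite <- Q2R_0. apply Qlt_Rlt, Qnot_le_lt. intro C. apply Qle_bool_iff in C. congruence. }
  repeat match goal with Hb : Qle_bool _ _ = true |- _ => apply Qle_bool_iff, Qle_Rle in Hb end.
  rewrite !Q2R_mult, Q2R_0, Q2R_1 in *.
  now apply inv_sqrt_bounds with (Q2R rl) (Q2R rh).
Qed.

Lemma box_of_correct q xl xu yl yu x y : box_valid q xl xu yl yu = true ->
  Q2R xl <= x <= Q2R xu -> Q2R yl <= y <= Q2R yu ->
  let bx := box_of q xl xu yl yu in
  in_interval (box_xi bx) x /\ in_interval (box_eta bx) y /\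
  in_interval (box_s1 bx) (inv_dist (Q2R q) x y) /\
  in_interval (box_s2 bx) (inv_dist (Q2R q - 1) x y).
Proof.
  unfold box_valid. intros H Hx Hy.
  apply andb_prop in H as [H Hs2]. apply andb_prop in H as [H Hs1].
  repeat (apply andb_prop in H; destruct H as [H ?]).
  repeat match goal with Hb : Qle_bool _ _ = true |- _ => apply Qle_bool_iff, Qle_Rle in Hb end.
  rewrite ?Q2R_plus, ?Q2R_0, ?Q2R_1 in *.
  unfold in_interval, box_of, inv_dist; simpl.
  pose proof (q_down_le xl). pose proof (q_up_ge xu).
  pose proof (q_down_le yl). pose proof (q_up_ge yu).
  split; [lra|]. split; [lra|]. split.
  - apply (inv_sqrt_check_correct _ _ _ _ _ Hs1). unfold dist1_lo, dist1_hi.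
    rewrite !Q2R_plus, !Q2R_mult, !Q2R_plus. simpl. split; nra.
  - apply (inv_sqrt_check_correct _ _ _ _ _ Hs2). unfold dist2_lo, dist2_hi.
    rewrite !Q2R_plus, !Q2R_mult, !Q2R_minus, !Q2R_plus, Q2R_1. simpl. split; nra.
Qed.

Lemma certify_correct q e xl xu yl yu L U x y : certify q e xl xu yl yu L U = true ->
  Q2R xl <= x <= Q2R xu -> Q2R yl <= y <= Q2R yu ->
  Q2R L <= eval_term q e x 0 y 0 <= Q2R U.
Proof.
  unfold certify. intros H Hx Hy.
  apply andb_prop in H as [Hb H]. apply andb_prop in H as [HL HU].
  apply Qle_bool_iff, Qle_Rle in HL. apply Qle_bool_iff, Qle_Rle in HU.
  destruct (box_of_correct _ _ _ _ _ _ _ Hb Hx Hy) as (H0 & H2 & H1 & H3).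
  pose proof (ieval_correct _ (at_rest e) _ _ _ _ H0 H2 H1 H3) as Hi.
  rewrite at_rest_eval in Hi. unfold in_interval, fx in Hi. unfold eval_term.
  rewrite !Q2R_num in *. lra.
Qed.

(** * A common zero of two functions *)

Section CommonZero.

Variables (F G : R -> R -> R) (x1 x2 y1 y2 a b : R).
Hypotheses (Hx12 : x1 < x2) (Hy12 : y1 < y2) (Ha : 0 < a) (Hb : 0 < b).
Hypothesis F_cont_x : forall x y, x1 <= x <= x2 -> y1 <= y <= y2 -> continuity_pt (fun t => F t y) x.
Hypothesis F_cont_y : forall x y, x1 <= x <= x2 -> y1 <= y <= y2 -> continuity_pt (fun t => F x t) y.
Hypothesis G_cont_y : forall x y, x1 <= x <= x2 -> y1 <= y <= y2 -> continuity_pt (fun t => G x t) y.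
Hypothesis F_incr : forall x x' y, x1 <= x -> x <= x' -> x' <= x2 -> y1 <= y <= y2 ->
  a * (x' - x) <= F x' y - F x y.
Hypothesis G_lip : forall x x' y, x1 <= x -> x <= x' -> x' <= x2 -> y1 <= y <= y2 ->
  Rabs (G x' y - G x y) <= b * (x' - x).
Hypothesis F_sides : forall y, y1 <= y <= y2 -> F x1 y < 0 /\ 0 < F x2 y.
Hypothesis G_bottom : forall x, x1 <= x <= x2 -> F x y1 = 0 -> G x y1 < 0.
Hypothesis G_top : forall x, x1 <= x <= x2 -> F x y2 = 0 -> 0 < G x y2.

Definition root_x (y : R) : R := epsilon (inhabits 0) (fun x => x1 <= x <= x2 /\ F x y = 0).

Lemma root_x_spec y : y1 <= y <= y2 -> x1 <= root_x y <= x2 /\ F (root_x y) y = 0.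
Proof.
  intros Hy. unfold root_x. apply epsilon_spec.
  destruct (F_sides y Hy) as [Hl Hr].
  destruct (IVT_interv (fun t => F t y) x1 x2) as [z Hz]; [|assumption..|now exists z].
  intros t Ht. now apply F_cont_x.
Qed.

Lemma root_x_shift c c0 : y1 <= c <= y2 -> y1 <= c0 <= y2 ->
  a * Rabs (root_x c - root_x c0) <= Rabs (F (root_x c0) c).
Proof.
  intros Hc Hc0.
  destruct (root_x_spec c Hc) as [Hz Hz0]. destruct (root_x_spec c0 Hc0) as [Hw _].
  destruct (Rle_or_lt (root_x c) (root_x c0)) as [h|h].
  - pose proof (F_incr (root_x c) (root_x c0) c ltac:(lra) h ltac:(lra) Hc).
    rewrite Rabs_left1, Rabs_right by nra. lra.
  - pose proof (F_incr (root_x c0) (root_x c) c ltac:(lra) ltac:(lra) ltac:(lra) Hc).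
    rewrite Rabs_right, Rabs_left1 by nra. lra.
Qed.

(* [continuity_pt] is two-sided even at y1 and y2; clamping extends [G_on_root]
   continuously beyond them. *)
Definition clamp_y (y : R) : R := Rmax y1 (Rmin y y2).

Lemma clamp_y_in y : y1 <= clamp_y y <= y2.
Proof. unfold clamp_y. split; [apply Rmax_l | apply Rmax_lub; [lra | apply Rmin_r]]. Qed.

Lemma clamp_y_id y : y1 <= y <= y2 -> clamp_y y = y.
Proof. intros H. unfold clamp_y. rewrite Rmin_left by lra. apply Rmax_right; lra. Qed.

Lemma clamp_y_lip y y0 : Rabs (clamp_y y - clamp_y y0) <= Rabs (y - y0).
Proof.
  unfold clamp_y, Rmax, Rmin. unfold Rabs.
  repeat destruct Rle_dec; repeat destruct Rcase_abs; lra.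
Qed.

Definition G_on_root (y : R) : R := G (root_x (clamp_y y)) (clamp_y y).

Lemma G_on_root_continuous y0 : continuity_pt G_on_root y0.
Proof.
  apply continuity_pt_eps_delta. intros eps Heps.
  set (c0 := clamp_y y0). set (X0 := root_x c0).
  assert (Hc0 : y1 <= c0 <= y2) by apply clamp_y_in.
  destruct (root_x_spec c0 Hc0) as [HX0 HFX0]. fold X0 in HX0, HFX0.
  destruct (proj1 (continuity_pt_eps_delta _ _) (F_cont_y X0 c0 HX0 Hc0) (eps * a / (2 * b)))
    as [d1 [Hd1 H1]].
  { apply Rmult_lt_0_compat; [nra | apply Rinv_0_lt_compat; lra]. }
  destruct (proj1 (continuity_pt_eps_delta _ _) (G_cont_y X0 c0 HX0 Hc0) (eps / 2))
    as [d2 [Hd2 H2]]; [lra|].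
  exists (Rmin d1 d2). split; [now apply Rmin_pos|].
  intros t Ht. set (c := clamp_y t).
  assert (Hc : y1 <= c <= y2) by apply clamp_y_in.
  assert (Hct : Rabs (c - c0) < Rmin d1 d2) by (eapply Rle_lt_trans; [apply clamp_y_lip | exact Ht]).
  specialize (H1 c ltac:(eapply Rlt_le_trans; [exact Hct | apply Rmin_l])).
  specialize (H2 c ltac:(eapply Rlt_le_trans; [exact Hct | apply Rmin_r])).
  rewrite HFX0, Rminus_0_r in H1.
  unfold G_on_root. fold c c0 X0.
  pose proof (root_x_shift c c0 Hc Hc0) as Hshift. fold X0 in Hshift.
  destruct (root_x_spec c Hc) as [HXc _].
  assert (HG : Rabs (G (root_x c) c - G X0 c) <= b * Rabs (root_x c - X0)).
  { destruct (Rle_or_lt (root_x c) X0) as [h|h].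
    - rewrite Rabs_minus_sym, (Rabs_minus_sym (root_x c)), (Rabs_right (X0 - root_x c)) by lra.
      apply G_lip; lra.
    - rewrite (Rabs_right (root_x c - X0)) by lra. apply G_lip; lra. }
  assert (HG2 : b * Rabs (root_x c - X0) < eps / 2).
  { apply Rmult_lt_reg_l with a; [exact Ha|].
    apply Rle_lt_trans with (b * Rabs (F X0 c)); [nra|].
    apply Rlt_le_trans with (b * (eps * a / (2 * b))); [nra|].
    right. field. lra. }
  replace (G (root_x c) c - G X0 c0) with ((G (root_x c) c - G X0 c) + (G X0 c - G X0 c0)) by ring.
  eapply Rle_lt_trans; [apply Rabs_triang | lra].
Qed.

Theorem common_zero_exists :
  exists x y, x1 <= x <= x2 /\ y1 <= y <= y2 /\ F x y = 0 /\ G x y = 0.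
Proof.
  assert (Hbot : G_on_root y1 < 0).
  { unfold G_on_root. rewrite clamp_y_id by lra.
    destruct (root_x_spec y1 ltac:(lra)) as [Hr HF]. now apply G_bottom. }
  assert (Htop : 0 < G_on_root y2).
  { unfold G_on_root. rewrite clamp_y_id by lra.
    destruct (root_x_spec y2 ltac:(lra)) as [Hr HF]. now apply G_top. }
  destruct (IVT_interv G_on_root y1 y2) as [y0 [Hy0 HG0]]; auto.
  { intros; apply G_on_root_continuous. }
  unfold G_on_root in HG0. rewrite clamp_y_id in HG0 by lra.
  destruct (root_x_spec y0 Hy0) as [Hx0 HF0].
  now exists (root_x y0), y0.
Qed.

End CommonZero.

Definition mu_Q : Q := 59729 # 19885499729.

Lemma mu_Q_eq : Q2R mu_Q = mu_ES.
Proof. reflexivity. Qed.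

Definition k_Q : Q := 331781608778473400 # 33612965254906458659549787.

Lemma k_Q_eq : Q2R k_Q = 1 / c_ES ^ 2.
Proof.
  unfold k_Q, c_ES. rewrite Q2R_num, Rpow_mult_distr, pow2_sqrt by lra. field.
Qed.

Definition W_ES : term := w_term mu_Q k_Q.
Definition n_ES : Q := n_term mu_Q k_Q.

Local Open Scope Q_scope.

Definition xi_lo : Q := 312498095327 # 625000000000.
Definition xi_hi : Q := 312498189077 # 625000000000.
Definition eta_lo : Q := 43301267124383 # 50000000000000.
Definition eta_hi : Q := 4330127145451 # 5000000000000.

Definition tiny : Q := 1 # 1000000000000000000.
Definition huge : Q := 1000.

Lemma cert_delta : certify mu_Q (t_delta mu_Q W_ES) xi_lo xi_hi eta_lo eta_hi tiny huge = true.
Proof. vm_compute. reflexivity. Qed.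
Lemma cert_c2 : certify mu_Q (t_c2 mu_Q n_ES W_ES) xi_lo xi_hi eta_lo eta_hi tiny huge = true.
Proof. vm_compute. reflexivity. Qed.
Lemma cert_c0 : certify mu_Q (t_c0 mu_Q W_ES) xi_lo xi_hi eta_lo eta_hi tiny huge = true.
Proof. vm_compute. reflexivity. Qed.
Lemma cert_disc : certify mu_Q (t_disc mu_Q n_ES W_ES) xi_lo xi_hi eta_lo eta_hi tiny huge = true.
Proof. vm_compute. reflexivity. Qed.

(* Numerical guesses: [xi_k_lo, xi_k_hi] brackets the zero of w_xi on the line
   eta = eta_k.  Only the certificates below matter. *)
Definition eta_1 : Q := 86602539022268958037 # 100000000000000000000.
Definition eta_2 : Q := 86602541022268958037 # 100000000000000000000.
Definition xi_1_lo : Q := 2499985099217976294747 # 5000000000000000000000.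
Definition xi_1_hi : Q := 2499985099218076294747 # 5000000000000000000000.
Definition xi_2_lo : Q := 2499984926013938880669 # 5000000000000000000000.
Definition xi_2_hi : Q := 2499984926014038880669 # 5000000000000000000000.

Lemma cert_hess00 : certify mu_Q (t_hess mu_Q W_ES 0 0) xi_lo xi_hi eta_1 eta_2 (7 # 10) huge = true.
Proof. vm_compute. reflexivity. Qed.
Lemma cert_hess02 : certify mu_Q (t_hess mu_Q W_ES 0 2) xi_lo xi_hi eta_1 eta_2 (- (13 # 10)) (13 # 10) = true.
Proof. vm_compute. reflexivity. Qed.

Lemma cert_left : certify mu_Q (dterm mu_Q 0 W_ES) xi_lo xi_lo eta_1 eta_2 (-1) (- tiny) = true.
Proof. vm_compute. reflexivity. Qed.
Lemma cert_right : certify mu_Q (dterm mu_Q 0 W_ES) xi_hi xi_hi eta_1 eta_2 tiny 1 = true.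
Proof. vm_compute. reflexivity. Qed.
Lemma cert_1_lo : certify mu_Q (dterm mu_Q 0 W_ES) xi_1_lo xi_1_lo eta_1 eta_1 (-1) (- tiny) = true.
Proof. vm_compute. reflexivity. Qed.
Lemma cert_1_hi : certify mu_Q (dterm mu_Q 0 W_ES) xi_1_hi xi_1_hi eta_1 eta_1 tiny 1 = true.
Proof. vm_compute. reflexivity. Qed.
Lemma cert_1_eta : certify mu_Q (dterm mu_Q 2 W_ES) xi_1_lo xi_1_hi eta_1 eta_1 (-1) (- tiny) = true.
Proof. vm_compute. reflexivity. Qed.
Lemma cert_2_lo : certify mu_Q (dterm mu_Q 0 W_ES) xi_2_lo xi_2_lo eta_2 eta_2 (-1) (- tiny) = true.
Proof. vm_compute. reflexivity. Qed.
Lemma cert_2_hi : certify mu_Q (dterm mu_Q 0 W_ES) xi_2_hi xi_2_hi eta_2 eta_2 tiny 1 = true.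
Proof. vm_compute. reflexivity. Qed.
Lemma cert_2_eta : certify mu_Q (dterm mu_Q 2 W_ES) xi_2_lo xi_2_hi eta_2 eta_2 tiny 1 = true.
Proof. vm_compute. reflexivity. Qed.

Local Close Scope Q_scope.

Lemma wfun_ES x xd y yd : between_primaries (Q2R mu_Q) x ->
  wfun (Q2R mu_Q) c_ES x xd y yd = eval_term mu_Q W_ES x xd y yd.
Proof. apply wfun_eval, k_Q_eq. Qed.

Lemma n_ES_eq : Q2R n_ES = nfac (Q2R mu_Q) c_ES.
Proof. apply n_term_eq, k_Q_eq. Qed.

Ltac Q2R_literals :=
  unfold xi_lo, xi_hi, eta_lo, eta_hi, eta_1, eta_2, xi_1_lo, xi_1_hi, xi_2_lo, xi_2_hi,
    tiny, huge, mu_Q in *;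
  rewrite ?Q2R_opp, ?Q2R_num in *.

Lemma between_ES x : Q2R xi_lo <= x <= Q2R xi_hi -> between_primaries (Q2R mu_Q) x.
Proof. unfold between_primaries. Q2R_literals. lra. Qed.

Lemma L4_ES_stable x y : in_rect x y -> is_equilibrium (Q2R mu_Q) c_ES x y ->
  forall l, is_eigenvalue 4 (jacobian (Q2R mu_Q) c_ES x y) l -> Re l = 0.
Proof.
  intros [Hx Hy] Heq l Hl.
  change (Q2R xi_lo <= x <= Q2R xi_hi) in Hx. change (Q2R eta_lo <= y <= Q2R eta_hi) in Hy.
  pose proof (between_ES x Hx) as Hb.
  assert (Htiny : 0 < Q2R tiny) by (Q2R_literals; lra).
  assert (Hstab := gyro_stable_of_terms mu_Q n_ES W_ES x y
    ltac:(pose proof (certify_correct _ _ _ _ _ _ _ _ x y cert_delta Hx Hy); lra)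
    ltac:(pose proof (certify_correct _ _ _ _ _ _ _ _ x y cert_c2 Hx Hy); lra)
    ltac:(pose proof (certify_correct _ _ _ _ _ _ _ _ x y cert_c0 Hx Hy); lra)
    ltac:(pose proof (certify_correct _ _ _ _ _ _ _ _ x y cert_disc Hx Hy); lra)).
  pose proof (proj1 Hstab) as Hdelta.
  pose proof (jacobian_gyroscopic mu_Q n_ES W_ES c_ES wfun_ES n_ES_eq x y Hb Heq
    ltac:(lra)) as HJ.
  exact (gyroscopic_eigenvalue_imaginary _ _ _ _ _ _ _ _ l HJ Hstab Hl).
Qed.

Definition w_xi (x y : R) : R := eval_term mu_Q (dterm mu_Q 0 W_ES) x 0 y 0.
Definition w_eta (x y : R) : R := eval_term mu_Q (dterm mu_Q 2 W_ES) x 0 y 0.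

Section ExistenceES.

Local Notation X1 := (Q2R xi_lo).
Local Notation X2 := (Q2R xi_hi).
Local Notation Y1 := (Q2R eta_1).
Local Notation Y2 := (Q2R eta_2).

Lemma w_xi_incr x x' y : X1 <= x -> x <= x' -> x' <= X2 -> Y1 <= y <= Y2 ->
  7 / 10 * (x' - x) <= w_xi x' y - w_xi x y.
Proof.
  intros H1 H2 H3 Hy. destruct (Req_dec x x') as [<-|Hne]; [lra|].
  destruct (MVT_cor2 (fun t => w_xi t y) (fun t => eval_term mu_Q (t_hess mu_Q W_ES 0 0) t 0 y 0) x x')
    as [c [Hc Hcx]]; [lra | |].
  - intros c Hc. apply dterm_correct_xi, between_ES. lra.
  - rewrite Hc. apply Rmult_le_compat_r; [lra|].
    destruct (certify_correct _ _ _ _ _ _ _ _ c y cert_hess00 ltac:(lra) Hy) as [Hl _].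
    rewrite Q2R_num in Hl. lra.
Qed.

Lemma w_eta_lip x x' y : X1 <= x -> x <= x' -> x' <= X2 -> Y1 <= y <= Y2 ->
  Rabs (w_eta x' y - w_eta x y) <= 13 / 10 * (x' - x).
Proof.
  intros H1 H2 H3 Hy. destruct (Req_dec x x') as [<-|Hne].
  { rewrite Rminus_diag, Rabs_R0. lra. }
  destruct (MVT_cor2 (fun t => w_eta t y) (fun t => eval_term mu_Q (t_hess mu_Q W_ES 0 2) t 0 y 0) x x')
    as [c [Hc Hcx]]; [lra | |].
  - intros c Hc. apply dterm_correct_xi, between_ES. lra.
  - rewrite Hc, Rabs_mult, (Rabs_right (x' - x)) by lra. apply Rmult_le_compat_r; [lra|].
    destruct (certify_correct _ _ _ _ _ _ _ _ c y cert_hess02 ltac:(lra) Hy) as [Hl Hu].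
    rewrite Q2R_opp, Q2R_num in *. apply Rabs_le. lra.
Qed.

Lemma w_xi_zero_bracket xa xb x y : X1 <= xa <= xb -> xb <= X2 -> X1 <= x <= X2 -> Y1 <= y <= Y2 ->
  w_xi xa y < 0 -> 0 < w_xi xb y -> w_xi x y = 0 -> xa < x < xb.
Proof.
  intros Ha Hb Hx Hy Hfa Hfb Hfx. split.
  - destruct (Rlt_or_le xa x) as [h|h]; [exact h|].
    pose proof (w_xi_incr x xa y ltac:(lra) h ltac:(lra) Hy). lra.
  - destruct (Rlt_or_le x xb) as [h|h]; [exact h|].
    pose proof (w_xi_incr xb x y ltac:(lra) h ltac:(lra) Hy). lra.
Qed.

Lemma w_xi_sides y : Y1 <= y <= Y2 -> w_xi X1 y < 0 /\ 0 < w_xi X2 y.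
Proof.
  intros Hy.
  pose proof (certify_correct _ _ _ _ _ _ _ _ X1 y cert_left ltac:(lra) Hy).
  pose proof (certify_correct _ _ _ _ _ _ _ _ X2 y cert_right ltac:(lra) Hy).
  unfold w_xi. Q2R_literals. lra.
Qed.

Lemma w_eta_bottom x : X1 <= x <= X2 -> w_xi x Y1 = 0 -> w_eta x Y1 < 0.
Proof.
  intros Hx Hf.
  assert (Hy : Y1 <= Y1 <= Y1) by lra.
  assert (Hy12 : Y1 < Y2) by (Q2R_literals; lra).
  assert (Hbox : X1 <= Q2R xi_1_lo <= Q2R xi_1_hi /\ Q2R xi_1_hi <= X2) by (Q2R_literals; lra).
  pose proof (certify_correct _ _ _ _ _ _ _ _ (Q2R xi_1_lo) _ cert_1_lo ltac:(lra) Hy).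
  pose proof (certify_correct _ _ _ _ _ _ _ _ (Q2R xi_1_hi) _ cert_1_hi ltac:(lra) Hy).
  assert (Htiny : 0 < Q2R tiny) by (Q2R_literals; lra).
  rewrite !Q2R_opp in *.
  destruct (w_xi_zero_bracket (Q2R xi_1_lo) (Q2R xi_1_hi) x Y1) as [Ha Hb];
    unfold w_xi in *; try lra.
  pose proof (certify_correct _ _ _ _ _ _ _ _ x _ cert_1_eta ltac:(lra) Hy).
  rewrite ?Q2R_opp in *. unfold w_eta. lra.
Qed.

Lemma w_eta_top x : X1 <= x <= X2 -> w_xi x Y2 = 0 -> 0 < w_eta x Y2.
Proof.
  intros Hx Hf.
  assert (Hy : Y2 <= Y2 <= Y2) by lra.
  assert (Hy12 : Y1 < Y2) by (Q2R_literals; lra).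
  assert (Hbox : X1 <= Q2R xi_2_lo <= Q2R xi_2_hi /\ Q2R xi_2_hi <= X2) by (Q2R_literals; lra).
  pose proof (certify_correct _ _ _ _ _ _ _ _ (Q2R xi_2_lo) _ cert_2_lo ltac:(lra) Hy).
  pose proof (certify_correct _ _ _ _ _ _ _ _ (Q2R xi_2_hi) _ cert_2_hi ltac:(lra) Hy).
  assert (Htiny : 0 < Q2R tiny) by (Q2R_literals; lra).
  rewrite !Q2R_opp in *.
  destruct (w_xi_zero_bracket (Q2R xi_2_lo) (Q2R xi_2_hi) x Y2) as [Ha Hb];
    unfold w_xi in *; try lra.
  pose proof (certify_correct _ _ _ _ _ _ _ _ x _ cert_2_eta ltac:(lra) Hy).
  rewrite ?Q2R_opp in *. unfold w_eta. lra.
Qed.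

Lemma L4_ES_exists : exists x y, in_rect x y /\ is_equilibrium (Q2R mu_Q) c_ES x y.
Proof.
  assert (Hrange : X1 < X2 /\ Y1 < Y2 /\ Q2R eta_lo <= Y1 /\ Y2 <= Q2R eta_hi) by (Q2R_literals; lra).
  destruct (common_zero_exists w_xi w_eta X1 X2 Y1 Y2 (7 / 10) (13 / 10))
    as (x & y & Hx & Hy & H0 & H2); try lra;
    auto using w_xi_incr, w_eta_lip, w_xi_sides, w_eta_bottom, w_eta_top;
    try (intros; apply eval_term_continuous_xi || apply eval_term_continuous_eta; apply between_ES; lra).
  exists x, y. split.
  - change (X1 <= x <= X2 /\ Q2R eta_lo <= y <= Q2R eta_hi). split; lra.
  - split; rewrite (Dp_wfun mu_Q W_ES c_ES wfun_ES) by (try apply between_ES; lia || lra); assumption.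
Qed.

End ExistenceES.

Theorem corollary5p3 :
  (exists xi0 eta0, in_rect xi0 eta0 /\ is_equilibrium mu_ES c_ES xi0 eta0) /\
  (forall xi0 eta0 : R,
     in_rect xi0 eta0 ->
     is_equilibrium mu_ES c_ES xi0 eta0 ->
     forall l : Cpx, is_eigenvalue 4 (jacobian mu_ES c_ES xi0 eta0) l ->
     Re l = 0).
Proof.
  rewrite <- mu_Q_eq. split.
  - exact L4_ES_exists.
  - exact L4_ES_stable.
Qed.
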